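(* Let $T=(V,E)$ be a finite tree, $\delta\in(0,1)$, and let $\mathcal H=\{\{i,j\}:\{i,j\}\in E\}$. Then for every $i\in V$, $$\mu_i(V;r^{v^T}_{\mathcal H})=\sum_{\substack{\{p,q\}\subseteq V,\ p\neq q\\ i\text{ lies on the }T\text{-path from }p\text{ to }q}}\frac{2\,\delta^{t_{pq}(T)}}{t_{pq}(T)+1},$$ where $t_{pq}(T)$ is the distance between $p$ and $q$ in $T$ (and the endpoints $p,q$ count as lying on the path).
   Context: For a finite simple undirected graph $G=(V,E)$ and $\delta\in(0,1)$: for $S\subseteq V$, $G[S]$ is the induced subgraph and $t_{ij}(G[S])$ the shortest-path distance in $G[S]$ ($=\infty$ if $i,j$ are disconnected there), with $\delta^\infty:=0$. The distance-polynomial worth is $v^G(S):=\sum_{i\in S}\sum_{j\in S,\,j\neq i}\delta^{t_{ij}(G[S])}$. A conference structure is a family $\mathcal H$ of subsets of $V$ of size $\ge2$; for $C\subseteq V$, $C/\mathcal H$ is the partition of $C$ into classes of the relation ''$i=j$, or there are $S_1,\dots,S_m\in\mathcal H$ all contained in $C$ with $i\in S_1$, $j\in S_m$, $S_k\cap S_{k+1}\neq\varnothing$''. The restricted worth is $r^{v^G}_{\mathcal H}(C):=\sum_{B\in C/\mathcal H}v^G(B)$. For a TU game $u$ on a finite player set $N$, $\mu_i(N;u):=\sum_{S\subseteq N\setminus\{i\}}\frac{|S|!(|N|-|S|-1)!}{|N|!}\bigl(u(S\cup\{i\})-u(S)\bigr)$ (the Shapley value; applied to $r^{v^G}_{\mathcal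 H}$ it is the Myerson value). *)

From HB Require Import structures.
From mathcomp Require Import all_boot all_order all_algebra.
Set Implicit Arguments. Unset Strict Implicit. Unset Printing Implicit Defensive.
Import Order.TTheory GRing.Theory Num.Theory.
Local Open Scope ring_scope.

Section Defs.
Variable V : finType.
Variable e : rel V.

Definition simple_graph := symmetric e /\ irreflexive e.

(* A graph cycle: a closed walk through >= 3 pairwise distinct vertices. *)
Definition acyclic := forall c : seq V, ~~ ((2 < size c)%N && ucycleb e c).
Definition connected := forall x y : V, connect e x y.
Definition is_tree := [/\ simple_graph, connected & acyclic].

Definition walkb (S : {set V}) (i j : V) (n : nat) : bool :=
  [exists s : n.-tuple V,
     [&& path e i s, last i s == j & all (fun x => x \in S) (i :: s)]].

(* Shortest-path distance in G[S]; None stands for infinity.  A shortest walk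
   repeats no vertex, hence has length < #|V|, so the bounded search is exact. *)
Definition dist (S : {set V}) (i j : V) : option nat :=
  let k := find (walkb S i j) (iota 0 #|V|) in
  if (k < #|V|)%N then Some k else None.

Variable R : realFieldType.
Variable delta : R.

(* delta ^ t with delta ^ infinity := 0 *)
Definition dpow (t : option nat) : R :=
  if t is Some n then delta ^+ n else 0.

Definition worth (S : {set V}) : R :=
  \sum_(i in S) \sum_(j in S | j != i) dpow (dist S i j).

Definition conference_structure (H : {set {set V}}) :=
  forall S, S \in H -> (2 <= #|S|)%N.

Definition adjH (H : {set {set V}}) (C : {set V}) : rel V :=
  fun x y => [exists S in H, [&& S \subset C, x \in S & y \in S]].

Definition partH (H : {set {set V}}) (C : {set V}) : {set {set V}} :=
  [set [set y in C | connect (adjH H C) x y] | x in C].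

Definition restricted (H : {set {set V}}) (C : {set V}) : R :=
  \sum_(B in partH H C) worth B.

(* Shapley value on player set N = V (whole type) *)
Definition shapley (u : {set V} -> R) (i : V) : R :=
  \sum_(S : {set V} | i \notin S)
     ((#|S|`! * (#|V| - #|S| - 1)`!)%:R / (#|V|`!)%:R) * (u (i |: S) - u S).

Definition edgeH : {set {set V}} := [set [set x; y] | x in V, y in V & e x y].

Definition on_path (i p q : V) : bool :=
  [exists n : 'I_#|V|, exists s : n.-tuple V,
     [&& path e p s, last p s == q, uniq (p :: s) & i \in p :: s]].

Definition pair_term (t : option nat) : R :=
  if t is Some n then 2 * delta ^+ n / (n.+1)%:R else 0.

End Defs.

From HB Require Import structures.
From mathcomp Require Import all_boot all_order all_algebra.
From mathcomp Require Import ring zify.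
Set Implicit Arguments. Unset Strict Implicit. Unset Printing Implicit Defensive.
Import Order.TTheory GRing.Theory Num.Theory.

(* In a tree two simple paths with the same ends coincide, so the distance
   between p and q inside a coalition C is |P(p,q)| - 1 when the T-path
   P(p,q) lies in C, and infinite otherwise.  The classes of C/H are the
   components of T[C], hence the restricted game is the sum over ordered
   pairs p <> q of the unanimity games on P(p,q) with weight
   delta^(|P(p,q)| - 1).  The Shapley value of the unanimity game on A with
   weight c gives c / |A| to each member of A, and |P(p,q)| = t_pq + 1. *)

Lemma find_iota_eq (P : pred nat) n k : k <= n -> P k ->
  (forall j, j < k -> ~~ P j) -> find P (iota 0 n) = k.
Proof.
move=> le_kn Pk P_before.
rewrite -(subnKC le_kn) iotaD add0n find_cat size_iota.
have -> : has P (iota 0 k) = false.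
  by apply/negbTE/hasPn => j; rewrite mem_iota add0n => /andP[_ /P_before].
by case: (n - k) => [|m] /=; rewrite ?Pk addn0.
Qed.

Lemma sum_bin_diag m b : \sum_(k < m.+1) 'C(k + b, b) = 'C(m + b.+1, b.+1).
Proof.
elim: m => [|m IH]; first by rewrite big_ord1 add0n binn add0n binn.
by rewrite big_ord_recr /= IH addSnnS addSn binS.
Qed.

Section Graph.
Variables (V : finType) (e : rel V).

Lemma walkb_path (C : {set V}) p s : path e p s -> {subset p :: s <= C} ->
  walkb e C p (last p s) (size s).
Proof.
move=> ps sC; apply/existsP; exists (in_tuple s); apply/and3P; split => //.
exact/allP.
Qed.

Lemma size_lt_card_uniq (p : V) s : uniq (p :: s) -> size s < #|V|.
Proof. by move=> Us; move: (card_uniqP Us) (max_card (mem (p :: s))) => /= ->. Qed.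

Lemma dist_notin (S : {set V}) p q : q \notin S -> dist e S p q = None.
Proof.
move=> qNS; rewrite /dist hasNfind ?size_iota ?ltnn //.
apply/hasPn => n _; apply: contra qNS => /existsP[s /and3P[_ /eqP <- /allP sS]].
exact/sS/mem_last.
Qed.

Section Tree.
Hypotheses (e_sym : symmetric e) (e_acyclic : acyclic e).

Lemma ucycle_glue_upaths p u u' y :
  path e p (rcons u y) -> path e p (rcons u' y) ->
  uniq (p :: rcons u y) -> uniq (p :: rcons u' y) -> ~~ has (mem u') u ->
  ucycleb e (p :: u ++ y :: rev u').
Proof.
move=> pu pu' Uu Uu' uu'.
have Uc : uniq ((p :: rcons u y) ++ rev u').
  have /and3P[pNu' yNu' {}Uu'] : [&& p \notin u', y \notin u' & uniq u'].
    move: Uu'; rewrite /= mem_rcons in_cons negb_or rcons_uniq.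
    by case/andP=> /andP[_ ->] ->.
  rewrite (cat_uniq (p :: rcons u y)) Uu rev_uniq Uu' andbT.
  apply/hasPn => z; rewrite mem_rev => zu'.
  rewrite /= in_cons mem_rcons in_cons !negb_or.
  apply/and3P; split; first by apply: contraNneq _ pNu' => <-.
    by apply: contraNneq _ yNu' => <-.
  by apply: contraL zu' => zu; move/hasPn: uu' => /(_ z zu).
apply/andP; split; last by move: Uc; rewrite /= cat_rcons.
rewrite /= rcons_cat cat_path /=.
move: pu; rewrite rcons_path => /andP[-> ->] /=.
have e_symT : (fun z w => e w z) =2 e by move=> z w; exact: e_sym.
by move: pu'; rewrite -rev_path last_rcons belast_rcons rev_cons (eq_path e_symT).
Qed.

Lemma upath_head_unique p x x' t t' :
  path e p (x :: t) -> path e p (x' :: t') ->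
  uniq (p :: x :: t) -> uniq (p :: x' :: t') -> last x t = last x' t' -> x = x'.
Proof.
move=> ps ps' Us Us' same_end; apply/eqP/negPn/negP => xx'.
have : has (mem (x' :: t')) (x :: t).
  by apply/hasP; exists (last x t); [|rewrite same_end]; apply: mem_last.
move Es: (x :: t) => s hs; move: Es.
case/(split_find_nth p): hs => y u w ys' uNs' Es.
have : has (pred1 y) (x' :: t') by apply/hasP; exists y => /=.
move Es': (x' :: t') => s' hs'; move: Es'.
case/(split_find_nth p): hs' => y' u' w' /eqP -> _ Es'.
have := e_acyclic (p :: u ++ y :: rev u'); apply/negP/negPn/andP; split.
  rewrite /= size_cat /= size_rev addnS !ltnS lt0n addn_eq0.
  apply: contra xx' => /andP[/nilP u0 /nilP u'0].
  by move: Es Es'; rewrite u0 u'0 => -[-> _] [-> _].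
apply: ucycle_glue_upaths.
- by move: ps; rewrite Es cat_path => /andP[].
- by move: ps'; rewrite Es' cat_path => /andP[].
- by move: Us; rewrite Es -cat_cons cat_uniq => /andP[].
- by move: Us'; rewrite Es' -cat_cons cat_uniq => /andP[].
- have u'_sub : {subset u' <= x' :: t'}.
    by move=> z zu'; rewrite Es' mem_cat mem_rcons in_cons zu' orbT.
  by apply: contra uNs'; apply: sub_has.
Qed.

Lemma upath_unique p s s' : path e p s -> path e p s' ->
  uniq (p :: s) -> uniq (p :: s') -> last p s = last p s' -> s = s'.
Proof.
elim: s p s' => [|x t IH] p [|x' t'] //=.
- by move=> _ _ _ /andP[+ _] pE; rewrite pE mem_last.
- by move=> _ _ /andP[+ _] _ pE; rewrite -pE mem_last.
move=> /[dup] pxt /andP[_ xt] /[dup] pxt' /andP[_ xt'] /[dup] Uxt /andP[_ Ut]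
       /[dup] Uxt' /andP[_ Ut'] same_end.
have xx' := upath_head_unique pxt pxt' Uxt Uxt' same_end; subst x'.
by rewrite (IH x t').
Qed.

Lemma walkb_upath (C : {set V}) p s n : path e p s -> uniq (p :: s) ->
  walkb e C p (last p s) n -> {subset p :: s <= C} /\ size s <= n.
Proof.
move=> ps Us /existsP[w /and3P[pw /eqP w_end /allP wC]].
case: (shortenP pw) w_end => s' ps' Us' s'_sub s'_end.
have -> : s = s' by apply: (upath_unique ps ps' Us Us'); rewrite s'_end.
split; first by move=> x; rewrite in_cons => /predU1P[-> | /s'_sub xw];
  apply: wC; rewrite ?mem_head // in_cons xw orbT.
by rewrite -(size_tuple w); apply: uniq_leq_size => //; case/andP: Us'.
Qed.

Lemma dist_upath (C : {set V}) p s : path e p s -> uniq (p :: s) ->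
  dist e C p (last p s) = if all (mem C) (p :: s) then Some (size s) else None.
Proof.
move=> ps Us; have lt_s_V := size_lt_card_uniq Us.
rewrite /dist; case: allP => [sC | sNC].
  rewrite (@find_iota_eq _ _ (size s)) ?lt_s_V ?(ltnW lt_s_V) ?walkb_path //.
  by move=> j lt_js; apply/negP => /(walkb_upath ps Us)[_]; rewrite leqNgt lt_js.
rewrite hasNfind ?size_iota ?ltnn //.
by apply/hasPn => n _; apply/negP => /(walkb_upath ps Us)[].
Qed.

Lemma on_path_upath x p s : path e p s -> uniq (p :: s) ->
  on_path e x p (last p s) = (x \in p :: s).
Proof.
move=> ps Us; apply/existsP/idP => [[n /existsP[w /and4P[pw /eqP w_end Uw]]] | xs].
  by rewrite (upath_unique pw ps Uw Us w_end).
exists (Ordinal (size_lt_card_uniq Us)); apply/existsP; exists (in_tuple s).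
by rewrite ps Us xs eqxx.
Qed.

Hypothesis e_conn : connected e.

Lemma upath_exists p q : exists s, [/\ path e p s, uniq (p :: s) & last p s = q].
Proof.
have /connectP[s ps ->] := e_conn p q.
by case: (shortenP ps) => s' ps' Us' _; exists s'.
Qed.

Definition path_set p q : {set V} := [set x | on_path e x p q].

Lemma path_set_ends p q : p \in path_set p q /\ q \in path_set p q.
Proof.
have [s [ps Us <-]] := upath_exists p q.
by rewrite !inE !on_path_upath // mem_head mem_last.
Qed.

Lemma dist_path_set (C : {set V}) p q :
  dist e C p q = if path_set p q \subset C then Some #|path_set p q|.-1 else None.
Proof.
have [s [ps Us <-]] := upath_exists p q.
have -> : path_set p (last p s) = [set x in p :: s].
  by apply/setP => x; rewrite !inE on_path_upath.
rewrite dist_upath // cardsE (card_uniqP Us); congr (if _ then _ else _).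
by apply/allP/subsetP => sC x; move: (sC x); rewrite inE.
Qed.

End Tree.
End Graph.

Local Open Scope ring_scope.

Section ShapleyUnanimity.
Variable R : realFieldType.

Lemma sum_shapley_weights m b :
  \sum_(k < m.+1) 'C(m, k)%:R * ((k + b)`! * (m - k)`!)%:R / (m + b.+1)`!%:R
  = (b.+1)%:R^-1 :> R.
Proof.
have weightE (k : 'I_m.+1) :
    ('C(m, k) * ((k + b)`! * (m - k)`!) = m`! * b`! * 'C(k + b, b))%N.
  rewrite -(bin_fact (ltnSE (ltn_ord k))).
  rewrite -{1}[(k + b)`!](bin_fact (leq_addl k b)) addnK; ring.
under eq_bigr => k _ do rewrite -natrM weightE.
rewrite -mulr_suml -natr_sum -big_distrr /= sum_bin_diag.
rewrite -(bin_fact (leq_addl m b.+1)) addnK factS !natrM.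
have fact_neq0 n : n`!%:R != 0 :> R by rewrite pnatr_eq0 -lt0n fact_gt0.
have binom_neq0 : 'C(m + b.+1, b.+1)%:R != 0 :> R.
  by rewrite pnatr_eq0 -lt0n bin_gt0 leq_addl.
by field; rewrite nat1r pnatr_eq0 !fact_neq0 binom_neq0.
Qed.

Lemma sum_subsets_card (T : finType) (X : {set T}) (f : nat -> R) :
  \sum_(A : {set T} | A \subset X) f #|A| = \sum_(k < #|X|.+1) 'C(#|X|, k)%:R * f k.
Proof.
rewrite (partition_big (fun A : {set T} => inord #|A| : 'I_#|X|.+1) xpredT) //=.
apply: eq_bigr => k _.
rewrite (eq_bigl [in [set A : {set T} | A \subset X & #|A| == k]]); last first.
  move=> A; rewrite !inE; case: (boolP (A \subset X)) => //= AX.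
  by rewrite -val_eqE /= inordK // ltnS subset_leq_card.
rewrite (eq_bigr (fun _ => f k)); last by move=> A; rewrite !inE => /andP[_ /eqP ->].
by rewrite sumr_const cards_draws mulr_natl.
Qed.

Lemma sum_interval_card (T : finType) (A B : {set T}) (f : nat -> R) :
  A \subset B ->
  \sum_(S : {set T} | (A \subset S) && (S \subset B)) f #|S| =
  \sum_(k < #|B :\: A|.+1) 'C(#|B :\: A|, k)%:R * f (k + #|A|)%N.
Proof.
move=> AB; rewrite -(sum_subsets_card (B :\: A) (fun k => f (k + #|A|)%N)).
rewrite (reindex_onto (fun S => S :|: A) (fun S => S :\: A)) /=; last first.
  move=> S /andP[AS _]; rewrite setDE setUIl [~: A :|: A]setUC setUCr setIT.
  exact/setUidPl.
apply: eq_big => S.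
  rewrite subsetUr subUset AB andbT setDUl setDv setU0 subsetD /=.
  by congr (_ && _); apply/eqP/idP => /setDidPl.
case/andP=> _; rewrite setDUl setDv setU0 => /eqP/setDidPl/disjoint_setI0 SA0.
by rewrite -cardsUI SA0 cards0 addn0.
Qed.

Section Games.
Variable V : finType.

Definition unanimity (A : {set V}) (c : R) (S : {set V}) : R :=
  if A \subset S then c else 0.

Lemma eq_shapley (u u' : {set V} -> R) i : u =1 u' -> shapley u i = shapley u' i.
Proof. by move=> uu'; apply: eq_bigr => S _; rewrite !uu'. Qed.

Lemma shapley_sum (I : Type) (r : seq I) (P : pred I) (F : I -> {set V} -> R) i :
  shapley (fun S => \sum_(k <- r | P k) F k S) i =
  \sum_(k <- r | P k) shapley (F k) i.
Proof.
rewrite /shapley exchange_big; apply: eq_bigr => S _.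
by rewrite -sumrB mulr_sumr.
Qed.

Lemma unanimity_out (A : {set V}) (c : R) (C : {set V}) x :
  x \in A -> x \notin C -> unanimity A c C = 0.
Proof.
move=> xA xNC; rewrite /unanimity ifF //.
by apply: contraNF xNC => /subsetP/(_ x xA).
Qed.

Lemma shapley_unanimity (A : {set V}) (c : R) i :
  shapley (unanimity A c) i = if i \in A then c / #|A|%:R else 0.
Proof.
rewrite /shapley /unanimity; have [iA | iNA] := boolP (i \in A); last first.
  have /setDidPl A'E : [disjoint A & [set i]] by rewrite disjoint_sym disjoints1.
  by apply: big1 => S _; rewrite -subDset A'E subrr mulr0.
set A' := A :\ i.
set w := fun s : nat => (s`! * (#|V| - s - 1)`!)%:R / #|V|`!%:R : R.
transitivity
  (c * \sum_(S : {set V} | (A' \subset S) && (S \subset [set~ i])) w #|S|).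
  rewrite mulr_sumr big_mkcondl /=.
  apply: eq_big => [S | S iNS]; first by rewrite subsetC sub1set inE.
  rewrite -subDset -/A'.
  have -> : A \subset S = false by apply: contraNF iNS => /subsetP/(_ i iA).
  by case: ifP => _; rewrite ?subr0 ?mulr0 ?subrr // mulrC.
have A'_sub : A' \subset [set~ i] by rewrite subsetC sub1set !inE eqxx.
rewrite sum_interval_card //; set m := #|_ :\: _|; set b := #|A'|.
have cardA : #|A| = b.+1 by rewrite (cardsD1 i A) iA.
have cardV : #|V| = (m + b.+1)%N.
  have := max_card (mem A); rewrite /m cardsDS // cardsC1 cardA; lia.
rewrite cardA -(sum_shapley_weights m b); congr (_ * _).
apply: eq_bigr => k _; rewrite /w cardV mulrA.
by rewrite (_ : m + b.+1 - (k + b) - 1 = m - k)%N //; lia.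
Qed.

End Games.
End ShapleyUnanimity.

Section RestrictedGame.
Variables (V : finType) (e : rel V).

Lemma adjH_sym (H : {set {set V}}) (C : {set V}) : symmetric (adjH H C).
Proof.
by move=> x y; apply/existsP/existsP => -[S /and4P[SH SC xS yS]]; exists S;
  rewrite SH SC xS yS.
Qed.

Lemma partH_partition (H : {set {set V}}) (C : {set V}) : partition (partH H C) C.
Proof.
apply: equivalence_partitionP => x y z _ _ _; split; first exact: connect0.
by move=> xy; apply/idP/idP; apply: connect_trans;
  rewrite // (sym_connect_sym (@adjH_sym H C)).
Qed.

Lemma adjH_edgeH (C : {set V}) x y :
  x \in C -> y \in C -> e x y -> adjH (edgeH e) C x y.
Proof.
move=> xC yC exy; apply/existsP; exists [set x; y].
rewrite set21 set22 !andbT; apply/andP; split.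
  by apply/imset2P; exists x y; rewrite ?inE.
by apply/subsetP => z; rewrite !inE => /orP[] /eqP ->.
Qed.

Lemma path_closed (C B : {set V}) p s :
  {in B, forall x z, z \in C -> e x z -> z \in B} ->
  p \in B -> path e p s -> {subset s <= C} -> {subset s <= B}.
Proof.
move=> B_closed; elim: s p => //= z s IH p pB /andP[epz ps] sC.
have zB : z \in B by apply: B_closed pB z (sC z (mem_head z s)) epz.
move=> x; rewrite in_cons => /predU1P[-> // | xs].
by apply: (IH z) => // y ys; apply: sC; rewrite in_cons ys orbT.
Qed.

Lemma walkb_closed (C B : {set V}) p q :
  B \subset C -> p \in B -> {in B, forall x z, z \in C -> e x z -> z \in B} ->
  walkb e C p q =1 walkb e B p q.
Proof.
move=> BC pB B_closed n; apply/existsP/existsP => -[s /and3P[ps s_end /allP sC]];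
  exists s; rewrite ps s_end; apply/allP => x; rewrite in_cons => /predU1P[-> | xs].
- exact: pB.
- apply: (path_closed B_closed pB ps) => // y ys.
  by apply: sC; rewrite in_cons ys orbT.
- by apply: (subsetP BC).
- by apply/(subsetP BC)/sC; rewrite in_cons xs orbT.
Qed.

Variables (R : realFieldType) (delta : R).
Hypothesis e_sym : symmetric e.

Lemma restricted_edgeH (C : {set V}) :
  restricted e delta (edgeH e) C =
  \sum_(p in C) \sum_(q in C | q != p) dpow delta (dist e C p q).
Proof.
rewrite /restricted (set_partition_big _ (partH_partition (edgeH e) C)).
apply: eq_bigr => _ /imsetP[x xC ->]; set B := [set y in C | _].
have BC : B \subset C by apply/subsetP => y; rewrite inE => /andP[].
have B_closed : {in B, forall y z, z \in C -> e y z -> z \in B}.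
  move=> y; rewrite inE => /andP[yC xy] z zC eyz; rewrite inE zC.
  exact: connect_trans xy (connect1 (adjH_edgeH yC zC eyz)).
apply: eq_bigr => p pB; rewrite big_mkcond [RHS]big_mkcond; apply: eq_bigr => q _.
rewrite /dist (eq_find (walkb_closed q BC pB B_closed)) -/(dist e B p q).
case: (boolP (q \in B)) => [qB | qNB]; first by rewrite (subsetP BC).
by rewrite dist_notin //; case: (_ \in C); case: (_ != _).
Qed.

Hypotheses (e_acyclic : acyclic e) (e_conn : connected e).

Lemma restricted_edgeH_tree (C : {set V}) :
  restricted e delta (edgeH e) C =
  \sum_p \sum_(q | q != p)
    unanimity (path_set e p q) (delta ^+ #|path_set e p q|.-1) C.
Proof.
have dpowE p q :
    dpow delta (dist e C p q) =
    unanimity (path_set e p q) (delta ^+ #|path_set e p q|.-1) C.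
  by rewrite dist_path_set // /unanimity; case: ifP.
rewrite restricted_edgeH big_mkcond; apply: eq_bigr => p _.
have ends := path_set_ends e_sym e_acyclic e_conn p.
have [pC | pNC] := boolP (p \in C); last first.
  by apply/esym/big1 => q _; rewrite (unanimity_out _ (ends q).1 pNC).
rewrite big_mkcondl; apply: eq_bigr => q _; rewrite dpowE.
by case: (boolP (q \in C)) => // qNC; rewrite (unanimity_out _ (ends q).2 qNC).
Qed.

End RestrictedGame.

Theorem mainTheorem3 (V : finType) (e : rel V) (R : realFieldType) (delta : R) :
  is_tree e -> 0 < delta -> delta < 1 ->
  forall i : V,
    shapley (restricted e delta (edgeH e)) i =
    2^-1 * \sum_(p : V) \sum_(q : V | (q != p) && on_path e i p q)
             pair_term delta (dist e [set: V] p q).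
Proof.
move=> [[e_sym _] e_conn e_acyclic] _ _ i.
rewrite (eq_shapley _ (restricted_edgeH_tree delta e_sym e_acyclic e_conn)).
rewrite shapley_sum mulr_sumr; apply: eq_bigr => p _.
rewrite shapley_sum mulr_sumr big_mkcondr; apply: eq_bigr => q _.
rewrite shapley_unanimity dist_path_set // subsetT inE.
case: ifP => // _; have [p_ends _] := path_set_ends e_sym e_acyclic e_conn p q.
have path_set_gt0 : (0 < #|path_set e p q|)%N by apply/card_gt0P; exists p.
rewrite /= prednK //; field.
by rewrite pnatr_eq0 -lt0n path_set_gt0.
Qed.
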